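(* Let $E$ be a Banach lattice with an order continuous norm, let $\mathfrak{B}$ be a Boolean subalgebra of $\mathfrak{B}(E)$, and let $T\colon E\to E$ be a $\mathfrak{B}$-Volterra operator with $T\le I_E$. Then the operator $\pi-\pi T+\pi^*T$ is $\mathfrak{B}$-Volterra for every $\pi\in\mathfrak{B}$. Further, if $\pi\in\mathfrak{B}$ satisfies $\pi T=\pi$, then the operator $I_E+\pi-T$ is $\mathfrak{B}$-Volterra.
   Context: $\mathfrak{B}(E)$ is the Boolean algebra of all order projections on $E$ ($\pi\le\rho$ iff $\pi\rho=\pi$, $\pi\wedge\rho=\pi\rho$, $\pi^*=I_E-\pi$, zero $\mathbf 0$, unit $\mathbf 1=I_E$). A positive operator $T\colon E\to E$ is $\mathfrak{B}$-Volterra if for all $\pi\in\mathfrak{B}$ and $x,y\in E$, $\pi x=\pi y$ implies $\pi Tx=\pi Ty$. $T\le I_E$ refers to the usual order on operators ($I_E-T$ positive). *)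

From HB Require Import structures.
From mathcomp Require Import all_boot all_order all_algebra.
From mathcomp Require Import all_classical all_reals.
From mathcomp Require Import topology normedtype.
Set Implicit Arguments. Unset Strict Implicit. Unset Printing Implicit Defensive.
Import Order.TTheory GRing.Theory Num.Theory.
Import numFieldNormedType.Exports.
Local Open Scope ring_scope.

(* A Banach lattice structure on a real Banach space E: a vector-lattice
   order (partial order compatible with the linear structure, with binary
   suprema) whose norm is a lattice norm ( |x| <= |y| -> ||x|| <= ||y|| ). *)
Record BanachLattice (R : realType) (E : completeNormedModType R) := {
  ble : E -> E -> Prop;
  ble_refl : forall x, ble x x;
  ble_trans : forall x y z, ble x y -> ble y z -> ble x z;
  ble_anti : forall x y, ble x y -> ble y x -> x = y;
  ble_add : forall x y z, ble x y -> ble (x + z) (y + z);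
  ble_scale : forall (a : R) x y, 0 <= a -> ble x y -> ble (a *: x) (a *: y);
  bjoin : E -> E -> E;
  bjoin_ub1 : forall x y, ble x (bjoin x y);
  bjoin_ub2 : forall x y, ble y (bjoin x y);
  bjoin_least : forall x y z, ble x z -> ble y z -> ble (bjoin x y) z;
  bnorm_lattice : forall x y,
    ble (bjoin x (- x)) (bjoin y (- y)) -> `|x| <= `|y|
}.

Section Defs.
Variables (R : realType) (E : completeNormedModType R) (L : BanachLattice E).

Definition lpos (x : E) := ble L 0 x.

(* Order continuity of the norm: for every downward directed set D with
   infimum 0 (i.e. a net decreasing to 0), inf_{x in D} ||x|| = 0. *)
Definition order_continuous_norm : Prop :=
  forall D : set E,
    (exists x, D x) ->
    (forall x y, D x -> D y -> exists2 z, D z & ble L z x /\ ble L z y) ->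
    (forall x, D x -> ble L 0 x) ->
    (forall l, (forall x, D x -> ble L l x) -> ble L l 0) ->
    forall e : R, 0 < e -> exists2 x, D x & `|x| < e.

Definition linear_op (T : E -> E) : Prop :=
  forall (a : R) x y, T (a *: x + y) = a *: T x + T y.

Definition positive_op (T : E -> E) : Prop :=
  linear_op T /\ forall x, lpos x -> lpos (T x).

Definition op_le (S T : E -> E) : Prop :=
  positive_op (fun x => T x - S x).

Definition order_projection (p : E -> E) : Prop :=
  linear_op p /\ (forall x, p (p x) = p x) /\
  (forall x, lpos x -> lpos (p x)) /\ (forall x, lpos x -> ble L (p x) x).

Definition pcompl (p : E -> E) : E -> E := fun x => x - p x.

Definition boolean_subalgebra (B : set (E -> E)) : Prop :=
  (forall p, B p -> order_projection p) /\
  B (fun _ => 0) /\ B id /\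
  (forall p q, B p -> B q -> B (p \o q)) /\
  (forall p, B p -> B (pcompl p)).

Definition volterra (B : set (E -> E)) (T : E -> E) : Prop :=
  positive_op T /\
  forall p x y, B p -> p x = p y -> p (T x) = p (T y).

End Defs.

From HB Require Import structures.
From mathcomp Require Import all_boot all_order all_algebra.
From mathcomp Require Import all_classical all_reals.
From mathcomp Require Import topology normedtype.
Import Order.TTheory GRing.Theory Num.Theory.
Import numFieldNormedType.Exports.
Set Implicit Arguments. Unset Strict Implicit. Unset Printing Implicit Defensive.
Local Open Scope ring_scope.

(* For a linear operator F, the Volterra property says exactly that F maps
   the kernel of every projection q in B into itself. This kernel condition
   is stable under sums, differences and composition, and every p in B
   satisfies it: r := q p q^* lies in B, and r r = 0 because q^* q = 0, so the
   idempotent r vanishes. Hence both operators are Volterra as soon as they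
   are positive, and positivity comes from 0 <= pi <= I_E and T <= I_E. *)

Section LinearOperators.
Variables (R : realType) (E : completeNormedModType R).

Section Linear.
Variables (f : E -> E) (lf : linear_op f).

Lemma linear_opD x y : f (x + y) = f x + f y.
Proof. by have := lf 1 x y; rewrite !scale1r. Qed.

Lemma linear_opB x y : f (x - y) = f x - f y.
Proof. by rewrite addrC -scaleN1r lf scaleN1r addrC. Qed.

Lemma linear_op0 : f 0 = 0.
Proof. by have := linear_opB 0 0; rewrite !subrr. Qed.

End Linear.

Lemma linear_op_id : linear_op (fun x : E => x).
Proof. by []. Qed.

Lemma linear_op_comp (f g : E -> E) :
  linear_op f -> linear_op g -> linear_op (fun x => f (g x)).
Proof. by move=> lf lg a x y; rewrite lg lf. Qed.

Lemma linear_op_add (f g : E -> E) :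
  linear_op f -> linear_op g -> linear_op (fun x => f x + g x).
Proof. by move=> lf lg a x y; rewrite lf lg scalerDr addrACA. Qed.

Lemma linear_op_sub (f g : E -> E) :
  linear_op f -> linear_op g -> linear_op (fun x => f x - g x).
Proof. by move=> lf lg a x y; rewrite lf lg scalerBr opprD addrACA. Qed.

End LinearOperators.

Section PositiveCone.
Variables (R : realType) (E : completeNormedModType R) (L : BanachLattice E).

Lemma lpos_add u v : lpos L u -> lpos L v -> lpos L (u + v).
Proof.
by move=> pu pv; apply: ble_trans pv _; rewrite -{1}[v]add0r; apply: ble_add.
Qed.

Lemma lpos_subr u v : ble L u v -> lpos L (v - u).
Proof. by move=> le_uv; rewrite /lpos -(subrr u); apply: ble_add. Qed.

End PositiveCone.

Section VolterraOperators.
Variables (R : realType) (E : completeNormedModType R) (L : BanachLattice E).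
Variable B : set (E -> E).
Hypothesis hB : boolean_subalgebra L B.

Lemma linear_proj q : B q -> linear_op q.
Proof. by move=> Bq; case: (hB.1 q Bq). Qed.

Definition kernel_stable (F : E -> E) : Prop :=
  forall q z, B q -> q z = 0 -> q (F z) = 0.

Lemma kernel_stable_id : kernel_stable (fun x => x).
Proof. by []. Qed.

Lemma kernel_stable_comp F G :
  kernel_stable F -> kernel_stable G -> kernel_stable (fun x => F (G x)).
Proof. by move=> sF sG q z Bq qz; apply/sF/sG. Qed.

Lemma kernel_stable_add F G :
  kernel_stable F -> kernel_stable G -> kernel_stable (fun x => F x + G x).
Proof.
move=> sF sG q z Bq qz.
by rewrite (linear_opD (linear_proj Bq)) sF // sG // addr0.
Qed.

Lemma kernel_stable_sub F G :
  kernel_stable F -> kernel_stable G -> kernel_stable (fun x => F x - G x).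
Proof.
move=> sF sG q z Bq qz.
by rewrite (linear_opB (linear_proj Bq)) sF // sG // subr0.
Qed.

Lemma kernel_stable_proj p : B p -> kernel_stable p.
Proof.
have [proj_B [_ [_ [comp_B compl_B]]]] := hB.
move=> Bp q z Bq qz; have lp := linear_proj Bp; have lq := linear_proj Bq.
have Br : B (q \o (p \o pcompl q)) by apply/comp_B/comp_B/compl_B.
have [_ [idem_q _]] := proj_B q Bq.
have [_ [idem_r _]] := proj_B _ Br.
have r0 x : q (p (pcompl q x)) = 0.
  have := idem_r x; rewrite /= => <-.
  by rewrite {1}/pcompl idem_q subrr linear_op0 // linear_op0.
by have := r0 z; rewrite /pcompl qz subr0.
Qed.

Lemma volterra_kernel_stable F : volterra L B F -> kernel_stable F.
Proof.
move=> [[lF _] vF] q z Bq qz; have lq := linear_proj Bq.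
by rewrite (vF q z 0) // ?linear_op0.
Qed.

Lemma kernel_stable_volterra F :
  positive_op L F -> kernel_stable F -> volterra L B F.
Proof.
move=> [lF posF] sF; split=> // q x y Bq qxy; have lq := linear_proj Bq.
apply/eqP; rewrite -subr_eq0 -!(linear_opB lq) -(linear_opB lF).
by apply/eqP/sF; rewrite // (linear_opB lq) qxy subrr.
Qed.

End VolterraOperators.

Theorem theorem3p11 (R : realType) (E : completeNormedModType R)
  (L : BanachLattice E) (B : set (E -> E)) (T : E -> E) :
  order_continuous_norm L ->
  boolean_subalgebra L B ->
  volterra L B T ->
  op_le L T id ->
  (forall p, B p ->
     volterra L B (fun x => p x - p (T x) + pcompl p (T x))) /\
  (forall p, B p -> (forall x, p (T x) = p x) ->
     volterra L B (fun x => x + p x - T x)).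
Proof.
move=> _ hB volT [_ posIT]; have [[lT posT] _] := volT.
have sT := volterra_kernel_stable hB volT.
split=> [p Bp | p Bp _]; have [lp [_ [posp lep]]] := hB.1 p Bp;
  have sp := kernel_stable_proj hB Bp.
- have lpT := linear_op_comp lp lT; have spT := kernel_stable_comp sp sT.
  apply: (kernel_stable_volterra hB); first split.
  + exact: (linear_op_add (linear_op_sub lp lpT) (linear_op_sub lT lpT)).
  + move=> x px; apply: lpos_add.
      by rewrite -(linear_opB lp); apply/posp/posIT.
    by apply/lpos_subr/lep/posT.
  + exact: (kernel_stable_add hB (kernel_stable_sub hB sp spT)
                                 (kernel_stable_sub hB sT spT)).
- apply: (kernel_stable_volterra hB); first split.
  + exact: (linear_op_sub (linear_op_add (@linear_op_id _ E) lp) lT).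
  + by move=> x px; rewrite addrAC; exact: (lpos_add (posIT x px) (posp x px)).
  + apply: (kernel_stable_sub hB) sT; apply: (kernel_stable_add hB) sp.
    exact: kernel_stable_id.
Qed.
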